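(* Let $S$ be a numerical semigroup with $\mathrm{l}(S)=2$. Then $\{\mathrm{F}(S),\mathrm{h}(S)\}\subseteq\mathrm{PF}(S)\subseteq\{\mathrm{F}(S),\mathrm{h}(S),\mathrm{F}(S)-\mathrm{h}(S)\}$. Moreover, $\mathrm{F}(S)-\mathrm{h}(S)\in\mathrm{PF}(S)$ if and only if $2\mathrm{h}(S)-\mathrm{F}(S)\notin S$.
   Context: A numerical semigroup is a subset $S\subseteq\mathbb{N}$ closed under addition with $0\in S$ and $\mathbb{N}\setminus S$ finite; $\mathrm{F}(S)=\max(\mathbb{Z}\setminus S)$. $\mathrm{N}(S)=\{s\in S\mid s<\mathrm{F}(S)\}$, $\mathrm{L}(S)=\{x\in\mathbb{N}\setminus S\mid \mathrm{F}(S)-x\notin \mathrm{N}(S)\}$, $\mathrm{l}(S)=\#\mathrm{L}(S)$. For $\mathrm{l}(S)\ge2$, $\mathrm{h}(S)=\max\{x\in\mathbb{N}\setminus S\mid \mathrm{F}(S)-x\in\mathbb{N}\setminus S,\ x\ne \mathrm{F}(S)/2\}$. $\mathrm{PF}(S)=\{x\in\mathbb{Z}\setminus S\mid x+s\in S \text{ for all } s\in S\setminus\{0\}\}$. *)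

From Stdlib Require Import ZArith Lia.
Open Scope Z_scope.

Definition is_numerical_semigroup (S : Z -> Prop) : Prop :=
  (forall x, S x -> 0 <= x) /\
  S 0 /\
  (forall x y, S x -> S y -> S (x + y)) /\
  (* N \ S is finite: there is a bound beyond which every natural is in S *)
  (exists m, forall x, m <= x -> S x).

Definition is_max (P : Z -> Prop) (m : Z) : Prop :=
  P m /\ forall x, P x -> x <= m.

Definition is_Frobenius (S : Z -> Prop) (F : Z) : Prop :=
  is_max (fun x => ~ S x) F.

Definition gap (S : Z -> Prop) (x : Z) : Prop := 0 <= x /\ ~ S x.

Definition Nset (S : Z -> Prop) (F : Z) (s : Z) : Prop := S s /\ s < F.

Definition Lset (S : Z -> Prop) (F : Z) (x : Z) : Prop :=
  gap S x /\ ~ Nset S F (F - x).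

Definition l_eq_2 (S : Z -> Prop) (F : Z) : Prop :=
  exists a b, a <> b /\ forall x, Lset S F x <-> (x = a \/ x = b).

Definition is_h (S : Z -> Prop) (F : Z) (h : Z) : Prop :=
  is_max (fun x => gap S x /\ gap S (F - x) /\ 2 * x <> F) h.

Definition PF (S : Z -> Prop) (x : Z) : Prop :=
  ~ S x /\ forall s, S s -> s <> 0 -> S (x + s).

(* A gap x whose complement F - x is also a gap lies in L(S); when l(S) = 2
   the only such gaps are h and F - h.  A pseudo-Frobenius number x <> F has
   F - x outside S (otherwise x + (F - x) = F would be in S), so PF(S) is
   contained in {F, h, F - h}.  Conversely, if h + s or F - h + s is a gap
   for some s in S \ {0}, then it forms a gap pair again, hence equals h or
   F - h; since F - h < h this is only possible for F - h + (2h - F) = h. *)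

From Stdlib Require Import ZArith Lia Classical.
Open Scope Z_scope.

Section NumericalSemigroup.

Variables (S : Z -> Prop) (F : Z).
Hypothesis S_nonneg : forall x, S x -> 0 <= x.
Hypothesis S_add : forall x y, S x -> S y -> S (x + y).
Hypothesis S_Frobenius : is_Frobenius S F.

Lemma mem_nonzero_pos s : S s -> s <> 0 -> 0 < s.
Proof. intros Ss Hs. specialize (S_nonneg s Ss). lia. Qed.

Lemma nonmem_le_Frobenius x : ~ S x -> x <= F.
Proof. apply (proj2 S_Frobenius). Qed.

Lemma mem_gt_Frobenius x : F < x -> S x.
Proof.
  intros Hx. apply NNPP. intros Nx.
  pose proof (nonmem_le_Frobenius x Nx). lia.
Qed.

Lemma Frobenius_PF : PF S F.
Proof.
  split; [apply (proj1 S_Frobenius)|].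
  intros s Ss Hs. apply mem_gt_Frobenius.
  pose proof (mem_nonzero_pos s Ss Hs). lia.
Qed.

Lemma PF_gap_pair x : PF S x -> x <> F -> gap S x /\ gap S (F - x).
Proof.
  intros [Nx PFx] HxF.
  assert (NFx : ~ S (F - x)).
  { intros SFx. apply (proj1 S_Frobenius).
    replace F with (x + (F - x)) by lia. apply PFx; [exact SFx | lia]. }
  pose proof (nonmem_le_Frobenius x Nx).
  pose proof (nonmem_le_Frobenius (F - x) NFx).
  repeat split; auto; lia.
Qed.

Lemma gap_pair_Lset x : gap S x -> gap S (F - x) -> Lset S F x.
Proof. intros Gx [_ NFx]. split; [exact Gx|]. intros [SFx _]. auto. Qed.

Lemma gap_pair_shift x s :
  0 <= x -> ~ S (F - x) -> S s -> s <> 0 -> ~ S (x + s) ->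
  gap S (x + s) /\ gap S (F - (x + s)).
Proof.
  intros Hx NFx Ss Hs Nxs.
  pose proof (mem_nonzero_pos s Ss Hs).
  pose proof (nonmem_le_Frobenius (x + s) Nxs).
  repeat split; auto; try lia.
  intros SFxs. apply NFx.
  replace (F - x) with (F - (x + s) + s) by lia. auto.
Qed.

Section LengthTwo.

Variable h : Z.
Hypothesis S_l2 : l_eq_2 S F.
Hypothesis S_h : is_h S F h.

Lemma h_gap : gap S h.
Proof. apply (proj1 (proj1 S_h)). Qed.

Lemma F_sub_h_gap : gap S (F - h).
Proof. apply (proj1 (proj2 (proj1 S_h))). Qed.

Lemma F_sub_F_sub_h_gap : gap S (F - (F - h)).
Proof. replace (F - (F - h)) with h by lia. exact h_gap. Qed.

Lemma F_sub_h_lt_h : F - h < h.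
Proof.
  destruct S_h as [[_ [_ Hh2]] h_max].
  assert (F - h <= h).
  { apply h_max. split; [exact F_sub_h_gap|].
    split; [exact F_sub_F_sub_h_gap | lia]. }
  lia.
Qed.

Lemma gap_pair_cases x : gap S x -> gap S (F - x) -> x = h \/ x = F - h.
Proof.
  intros Gx GFx.
  destruct S_l2 as [a [b [_ L_ab]]].
  pose proof (proj1 (L_ab x) (gap_pair_Lset x Gx GFx)).
  pose proof (proj1 (L_ab h) (gap_pair_Lset h h_gap F_sub_h_gap)).
  pose proof (proj1 (L_ab (F - h))
                (gap_pair_Lset (F - h) F_sub_h_gap F_sub_F_sub_h_gap)).
  pose proof F_sub_h_lt_h.
  lia.
Qed.

Lemma h_PF : PF S h.
Proof.
  split; [apply h_gap|].
  intros s Ss Hs. apply NNPP. intros Nhs.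
  destruct (gap_pair_shift h s (proj1 h_gap) (proj2 F_sub_h_gap) Ss Hs Nhs)
    as [Ghs GFhs].
  pose proof (mem_nonzero_pos s Ss Hs). pose proof F_sub_h_lt_h.
  destruct (gap_pair_cases (h + s) Ghs GFhs); lia.
Qed.

Lemma F_sub_h_PF_iff : PF S (F - h) <-> ~ S (2 * h - F).
Proof.
  pose proof F_sub_h_lt_h.
  split.
  - intros [_ PFh] S2hF. apply (proj2 h_gap).
    replace h with (F - h + (2 * h - F)) by lia. apply PFh; [exact S2hF | lia].
  - intros N2hF. split; [apply F_sub_h_gap|].
    intros s Ss Hs. apply NNPP. intros Nhs.
    destruct (gap_pair_shift (F - h) s (proj1 F_sub_h_gap)
                (proj2 F_sub_F_sub_h_gap) Ss Hs Nhs) as [Ghs GFhs].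
    pose proof (mem_nonzero_pos s Ss Hs).
    destruct (gap_pair_cases (F - h + s) Ghs GFhs); [|lia].
    apply N2hF. replace (2 * h - F) with s by lia. exact Ss.
Qed.

Lemma PF_cases x : PF S x -> x = F \/ x = h \/ x = F - h.
Proof.
  intros PFx. destruct (Z.eq_dec x F) as [|HxF]; [left; assumption|right].
  destruct (PF_gap_pair x PFx HxF) as [Gx GFx].
  apply gap_pair_cases; assumption.
Qed.

End LengthTwo.

End NumericalSemigroup.

Theorem proposition12 (S : Z -> Prop) (F h : Z)
  (HS : is_numerical_semigroup S)
  (HF : is_Frobenius S F)
  (Hl : l_eq_2 S F)
  (Hh : is_h S F h) :
  (PF S F /\ PF S h) /\
  (forall x, PF S x -> x = F \/ x = h \/ x = F - h) /\
  (PF S (F - h) <-> ~ S (2 * h - F)).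
Proof.
  destruct HS as [S_nonneg [_ [S_add _]]].
  split; [split|split].
  - apply Frobenius_PF; assumption.
  - apply h_PF with F; assumption.
  - intros x. apply PF_cases; assumption.
  - apply F_sub_h_PF_iff; assumption.
Qed.
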